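(* If $G$ is a graph that contains no induced subgraph isomorphic to $C_5$ and no induced subgraph isomorphic to the bull, and $G$ contains an anchor, then $G$ contains a homogeneous set.
   Context: All graphs are finite and simple. The bull is the graph consisting of a triangle with two disjoint pendant edges. For disjoint $A,B\subseteq V(G)$, $A$ is complete (anticomplete) to $B$ if every vertex of $A$ is adjacent (non-adjacent) to every vertex of $B$. A set $X\subseteq V(G)$ is a homogeneous set if $1<|X|<|V(G)|$ and every vertex of $V(G)\setminus X$ is either complete or anticomplete to $X$. An anchor is a six-vertex graph consisting of a 4-vertex induced path $P$, a vertex $c$ complete to $V(P)$, and a vertex $a$ anticomplete to $V(P)$ (with $a,c$ either adjacent or not). $G$ contains an anchor if some induced subgraph of $G$ is isomorphic to an anchor. *)

From mathcomp Require Import all_boot.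
Set Implicit Arguments. Unset Strict Implicit. Unset Printing Implicit Defensive.

Definition simple_graph (T : finType) (e : rel T) : Prop :=
  irreflexive e /\ symmetric e.

Definition has_induced (T : finType) (e : rel T) (k : nat) (h : rel 'I_k) : Prop :=
  exists f : 'I_k -> T, injective f /\ forall i j, h i j = e (f i) (f j).

Definition edges_rel (k : nat) (E : seq (nat * nat)) : rel 'I_k :=
  fun i j => ((val i, val j) \in E) || ((val j, val i) \in E).

Definition C5 : rel 'I_5 :=
  @edges_rel 5 [:: (0,1); (1,2); (2,3); (3,4); (4,0)].

Definition bull : rel 'I_5 :=
  @edges_rel 5 [:: (0,1); (1,2); (0,2); (0,3); (1,4)].

(* anchors: induced path 0-1-2-3, vertex 4 (= c) complete to the path,
   vertex 5 (= a) anticomplete to the path; a,c nonadjacent or adjacent. *)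
Definition anchor_nonadj : rel 'I_6 :=
  @edges_rel 6 [:: (0,1); (1,2); (2,3); (4,0); (4,1); (4,2); (4,3)].
Definition anchor_adj : rel 'I_6 :=
  @edges_rel 6 [:: (0,1); (1,2); (2,3); (4,0); (4,1); (4,2); (4,3); (4,5)].

Definition contains_anchor (T : finType) (e : rel T) : Prop :=
  has_induced e anchor_nonadj \/ has_induced e anchor_adj.

Definition homogeneous (T : finType) (e : rel T) (X : {set T}) : Prop :=
  1 < #|X| < #|T| /\
  forall v, v \notin X -> (forall x, x \in X -> e v x) \/ (forall x, x \in X -> ~~ e v x).

From Pilot Require Import Defs.
From mathcomp Require Import all_boot.
Set Implicit Arguments. Unset Strict Implicit. Unset Printing Implicit Defensive.

(* Let p1-p2-p3-p4 be the induced path of the anchor. Call a vertex excluded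
   if it is the center c of an anchor on this path with a ~ c, the tip a of
   one with a !~ c, or a neighbour of such a tip. Starting from S = {p1, p2},
   repeatedly add to S a vertex with both a neighbour and a non-neighbour in
   S; when no such vertex is left, S is a homogeneous set unless S = V(G).
   The anchor provides an excluded vertex, so it suffices that S never
   contains one. This is kept as an invariant together with two auxiliary
   ones: centers of the first kind are complete to S, and if S contains a
   vertex complete to the path then it contains such a vertex x and a vertex
   w mixed on the path with x !~ w. Each preservation step reduces to ruling
   out a configuration of at most eight vertices, which always contains an
   induced bull or C5; these finitely many cases are decided by computing
   with the adjacency matrix of the configuration. *)

Definition edge_in (E : seq (nat * nat)) (i j : nat) : bool :=
  ((i, j) \in E) || ((j, i) \in E).

Definition entry (M : seq (seq bool)) (i j : nat) : bool := nth false (nth [::] M i) j.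

(* For a twin-free pattern, every map preserving adjacency and non-adjacency
   into a loopless graph is injective. *)
Definition twin_free (E : seq (nat * nat)) (k : nat) : bool :=
  all (fun i => all (fun j =>
    all (fun l => edge_in E i l == edge_in E j l) (iota 0 k) && ~~ edge_in E i j ==> (i == j))
    (iota 0 k)) (iota 0 k).

Definition embeds_at (E : seq (nat * nat)) (k : nat) (M : seq (seq bool)) (f : seq nat) : bool :=
  [&& size f == k, all (fun x => x < size M) f &
      all (fun i => all (fun j => edge_in E i j == entry M (nth 0 f i) (nth 0 f j))
                        (iota 0 k)) (iota 0 k)].

Definition compatible_next E M (f : seq nat) (x : nat) : bool :=
  all (fun i => edge_in E i (size f) == entry M (nth 0 f i) x) (iota 0 (size f)).

Fixpoint compatible_maps E M (n k : nat) (f : seq nat) : seq (seq nat) :=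
  if k is k'.+1 then
    flatten [seq compatible_maps E M n k' (rcons f x) | x <- iota 0 n & compatible_next E M f x]
  else [:: f].

(* compatible_maps is only a pruned search; its candidates are re-checked by
   embeds_at, so no correctness proof of the search is needed. *)
Definition has_pattern (E : seq (nat * nat)) (k : nat) (M : seq (seq bool)) : bool :=
  has (embeds_at E k M) (compatible_maps E M (size M) k [::]).

Lemma ord_in_iota k (l : 'I_k) : val l \in iota 0 k.
Proof. by rewrite mem_iota ltn_ord. Qed.

Lemma twin_freeP k E (i j : 'I_k) :
  twin_free E k -> (forall l, @edges_rel k E i l = edges_rel E j l) -> ~~ edges_rel E i j ->
  i = j.
Proof.
move=> /allP/(_ i (ord_in_iota i))/allP/(_ j (ord_in_iota j))/implyP twin_ij h_ij nij.
apply/val_inj/eqP/twin_ij; rewrite nij andbT; apply/allP => l.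
by rewrite mem_iota => /= lt_lk; apply/eqP/(h_ij (Ordinal lt_lk)).
Qed.

Section AdjacencyMatrix.
Variables (T : finType) (e : rel T).
Hypothesis irr : irreflexive e.

Definition adj_matrix (xs : seq T) : seq (seq bool) := [seq [seq e x y | y <- xs] | x <- xs].

Lemma entry_adj_matrix x0 xs i j : i < size xs -> j < size xs ->
  entry (adj_matrix xs) i j = e (nth x0 xs i) (nth x0 xs j).
Proof. by move=> ? ?; rewrite /entry !(nth_map x0). Qed.

Lemma has_pattern_induced k E (x0 : T) xs :
  twin_free E k -> has_pattern E k (adj_matrix xs) ->
  has_induced e (@edges_rel k E).
Proof.
move=> twinE /hasP[f _ /and3P[/eqP size_f /allP f_lt f_edges]].
rewrite size_map in f_lt.
have f_in (i : 'I_k) : nth 0 f i < size xs by apply/f_lt/mem_nth; rewrite size_f.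
pose g (i : 'I_k) := nth x0 xs (nth 0 f i).
have g_edges (i j : 'I_k) : edges_rel E i j = e (g i) (g j).
  rewrite -entry_adj_matrix //.
  exact/eqP/(allP (allP f_edges _ (ord_in_iota i)) _ (ord_in_iota j)).
exists g; split=> // i j g_ij; apply: (twin_freeP twinE).
  by move=> l; rewrite !g_edges g_ij.
by rewrite g_edges g_ij irr.
Qed.

End AdjacencyMatrix.

Section Splitting.
Variables (T : finType) (e : rel T).

Definition splits (S : {set T}) v := [exists s in S, e v s] && [exists s in S, ~~ e v s].

Lemma homogeneous_of_unsplit (S : {set T}) :
  1 < #|S| < #|T| -> (forall v, v \notin S -> ~~ splits S v) -> homogeneous e S.
Proof.
move=> card_S unsplit; split=> // v vS; have := unsplit v vS.
rewrite /splits negb_and => /orP[/existsPn nbrs | /existsPn nonnbrs].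
  by right=> x xS; have := nbrs x; rewrite xS.
by left=> x xS; have := nonnbrs x; rewrite xS negbK.
Qed.

End Splitting.

(* The edge lists of bull and C5 from Defs; no_forbidden_pattern only
   typechecks if they agree. *)
Definition bull_edges : seq (nat * nat) := [:: (0,1); (1,2); (0,2); (0,3); (1,4)].
Definition C5_edges : seq (nat * nat) := [:: (0,1); (1,2); (2,3); (3,4); (4,0)].

Lemma twin_free_bull : twin_free bull_edges 5. Proof. by []. Qed.
Lemma twin_free_C5 : twin_free C5_edges 5. Proof. by []. Qed.

Section BullC5Free.
Variables (T : finType) (e : rel T).
Hypotheses (irr : irreflexive e) (sym : symmetric e).
Hypotheses (noC5 : ~ has_induced e C5) (nobull : ~ has_induced e bull).

Definition forbidden_in (M : seq (seq bool)) : bool :=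
  has_pattern bull_edges 5 M || has_pattern C5_edges 5 M.

Lemma no_forbidden_pattern xs : ~~ forbidden_in (adj_matrix e xs).
Proof.
case: xs => [|x0 xs] //; apply/negP; case/orP=> [has_bull | has_C5].
  exact: nobull (has_pattern_induced irr x0 twin_free_bull has_bull).
exact: noC5 (has_pattern_induced irr x0 twin_free_C5 has_C5).
Qed.

(* Refutes a configuration on the vertices xs: composite boolean hypotheses
   are reverted, adjacencies known from the context are rewritten, the
   remaining ones are split on, and each resulting adjacency matrix is shown
   by computation to contain a bull or a C5. *)
Ltac refute_on xs :=
  apply: (negP (no_forbidden_pattern xs)); rewrite /adj_matrix; cbn [map];
  repeat match goal with
  | H : is_true ?b |- _ => lazymatch b with e _ _ => fail | ~~ e _ _ => fail | _ => move: H end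
  end;
  repeat first
  [ rewrite irr
  | match goal with
    | H : is_true (e ?x ?y) |- context [e ?x ?y] => rewrite H
    | H : is_true (e ?x ?y) |- context [e ?y ?x] => rewrite (sym y x) H
    | H : is_true (~~ e ?x ?y) |- context [e ?x ?y] => rewrite (negbTE H)
    | H : is_true (~~ e ?x ?y) |- context [e ?y ?x] => rewrite (sym y x) (negbTE H)
    end ];
  repeat match goal with |- context [e ?x ?y] => rewrite ?(sym y x); case: (e x y) end;
  vm_compute; done.

Lemma pendants_adjacent v x c a w :
  e x v -> e c x -> e c v -> e v a -> ~~ e x a -> ~~ e c a -> e c w -> ~~ e v w -> ~~ e x w ->
  e w a.
Proof. by move=> *; apply/negPn/negP => ?; refute_on [:: v; x; c; a; w]. Qed.

Section AlongAnInducedPath.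
Variables p1 p2 p3 p4 : T.
Hypotheses (e12 : e p1 p2) (e23 : e p2 p3) (e34 : e p3 p4)
  (n13 : ~~ e p1 p3) (n14 : ~~ e p1 p4) (n24 : ~~ e p2 p4).

Definition complete v := [&& e v p1, e v p2, e v p3 & e v p4].
Definition anticomplete v := [&& ~~ e v p1, ~~ e v p2, ~~ e v p3 & ~~ e v p4].
Definition mixed v := ~~ complete v && ~~ anticomplete v.

Definition nonadj_anchor_tip a := anticomplete a && [exists c, complete c && ~~ e c a].
Definition adj_anchor_center c := complete c && [exists a, anticomplete a && e c a].
Definition excluded v :=
  [|| adj_anchor_center v, nonadj_anchor_tip v | [exists a, nonadj_anchor_tip a && e v a]].

Lemma completeP v : [\/ complete v, anticomplete v | mixed v].
Proof.
rewrite /mixed; case: (boolP (complete v)) => [|_]; first by constructor 1.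
by case: (boolP (anticomplete v)) => [|_]; [constructor 2 | constructor 3].
Qed.

Lemma not_excludedP v : ~~ excluded v ->
  [/\ ~~ adj_anchor_center v, ~~ nonadj_anchor_tip v & forall a, nonadj_anchor_tip a -> ~~ e v a].
Proof.
rewrite /excluded !negb_or => /and3P[-> -> /existsPn tips]; split=> // a tip_a.
by have := tips a; rewrite tip_a.
Qed.

Lemma complete_adj_not_tip c a : anticomplete a -> ~~ nonadj_anchor_tip a -> complete c -> e c a.
Proof.
move=> anti_a; rewrite /nonadj_anchor_tip anti_a => /existsPn/(_ c) + cmp_c.
by rewrite cmp_c negbK.
Qed.

Lemma not_center_nonadj_anticomplete c a :
  complete c -> ~~ adj_anchor_center c -> anticomplete a -> ~~ e c a.
Proof.
move=> cmp_c; rewrite /adj_anchor_center cmp_c => /existsPn/(_ a) + anti_a.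
by rewrite anti_a.
Qed.

Lemma nonadj_anchor_tip_mixed a r : nonadj_anchor_tip a -> mixed r -> ~~ e r a.
Proof.
case/andP=> /and4P[? ? ? ?] /existsP[c /andP[/and4P[? ? ? ?] ?]] mixed_r.
rewrite /mixed /complete /anticomplete in mixed_r.
by apply/negP => ?; refute_on [:: p1; p2; p3; p4; c; a; r].
Qed.

Lemma adj_anchor_center_mixed c r : adj_anchor_center c -> mixed r -> e c r.
Proof.
case/andP=> /and4P[? ? ? ?] /existsP[a /andP[/and4P[? ? ? ?] ?]] mixed_r.
rewrite /mixed /complete /anticomplete in mixed_r.
by apply/negPn/negP => ?; refute_on [:: p1; p2; p3; p4; c; a; r].
Qed.

Lemma common_nbr_complete c v a y :
  complete c -> anticomplete v -> anticomplete a -> ~~ e c a -> e c v -> e v a ->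
  e c y -> ~~ e y a -> e v y -> complete y.
Proof.
move=> /and4P[? ? ? ?] /and4P[? ? ? ?] /and4P[? ? ? ?] *.
by apply/negPn/negP; rewrite /complete => ?; refute_on [:: p1; p2; p3; p4; c; v; y; a].
Qed.

Lemma complete_pair_common_nbr c a v y :
  complete c -> anticomplete a -> e c a -> complete v -> ~~ anticomplete y ->
  e c y -> ~~ e y a -> ~~ e v c -> ~~ e v a -> e v y.
Proof.
move=> /and4P[? ? ? ?] /and4P[? ? ? ?] ? /and4P[? ? ? ?]; rewrite /anticomplete => *.
by apply/negPn/negP => ?; refute_on [:: p1; p2; p3; p4; c; y; a; v].
Qed.

Record admissible (S : {set T}) : Prop := Admissible {
  p1_in : p1 \in S;
  p2_in : p2 \in S;
  admissible_not_excluded : {in S, forall v, ~~ excluded v};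
  adj_anchor_center_complete : forall c, adj_anchor_center c -> {in S, forall s, e c s};
  complete_has_mixed_nonnbr : (exists2 x, x \in S & complete x) ->
    exists x w, [/\ x \in S, w \in S, complete x, mixed w & ~~ e x w] }.

Section AddSplitter.
Variables (S : {set T}) (v s1 s2 : T).
Hypotheses (admS : admissible S) (s1S : s1 \in S) (vs1 : e v s1) (s2S : s2 \in S) (vs2 : ~~ e v s2).

Lemma anticomplete_splitter_nonadj_tip a :
  anticomplete v -> ~~ nonadj_anchor_tip v -> nonadj_anchor_tip a -> ~~ e v a.
Proof.
move=> anti_v not_tip_v tip_a; apply/negP => va.
have /andP[anti_a /existsP[c /andP[cmp_c ca]]] := tip_a.
have cv : e c v := complete_adj_not_tip anti_v not_tip_v cmp_c.
have center_c : adj_anchor_center c.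
  by rewrite /adj_anchor_center cmp_c; apply/existsP; exists v; rewrite anti_v cv.
have cS := adj_anchor_center_complete admS center_c.
have Sa (s : T) (sS : s \in S) : ~~ e s a.
  by have [_ _] := not_excludedP (admissible_not_excluded admS sS); apply.
have nbrs_complete (y : T) (yS : y \in S) : e v y -> complete y.
  exact: common_nbr_complete cmp_c anti_v anti_a ca cv va (cS y yS) (Sa y yS).
have [x [w [xS wS cmp_x /andP[not_cmp_w _] xw]]] :=
  complete_has_mixed_nonnbr admS (ex_intro2 _ _ s1 s1S (nbrs_complete s1 s1S vs1)).
have vw : ~~ e v w by apply: contra not_cmp_w; apply: nbrs_complete.
have xv : e x v := complete_adj_not_tip anti_v not_tip_v cmp_x.
have := pendants_adjacent xv (cS x xS) cv va (Sa x xS) ca (cS w wS) vw xw.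
by rewrite (negbTE (Sa w wS)).
Qed.

Lemma splitter_not_excluded : ~~ excluded v.
Proof.
have not_center_v : ~~ adj_anchor_center v.
  by apply: contraNN vs2 => /(adj_anchor_center_complete admS); apply.
have not_tip_v : ~~ nonadj_anchor_tip v.
  have [_ _ Ss1] := not_excludedP (admissible_not_excluded admS s1S).
  by apply/negP => /Ss1; rewrite sym vs1.
rewrite /excluded (negbTE not_center_v) (negbTE not_tip_v) /=.
apply/existsPn => a; apply/negP => /andP[tip_a va].
case: (completeP v) => [cmp_v | anti_v | mixed_v].
- move/negP: not_center_v; apply; rewrite /adj_anchor_center cmp_v.
  by apply/existsP; exists a; case/andP: tip_a => ->.
- by rewrite (negbTE (anticomplete_splitter_nonadj_tip anti_v not_tip_v tip_a)) in va.
- by rewrite (negbTE (nonadj_anchor_tip_mixed tip_a mixed_v)) in va.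
Qed.

Lemma adj_anchor_center_adj_splitter c : adj_anchor_center c -> e c v.
Proof.
move=> center_c; have /andP[cmp_c /existsP[a /andP[anti_a ca]]] := center_c.
have [not_center_v not_tip_v _] := not_excludedP splitter_not_excluded.
case: (completeP v) => [cmp_v | anti_v | mixed_v].
- apply/negPn/negP => not_cv.
  have vc : ~~ e v c by rewrite sym.
  have va := not_center_nonadj_anticomplete cmp_v not_center_v anti_a.
  have [not_center_s2 not_tip_s2 _] := not_excludedP (admissible_not_excluded admS s2S).
  have s2a : ~~ e s2 a.
    case: (completeP s2) => [cmp_s2 | anti_s2 | mixed_s2].
    + exact: not_center_nonadj_anticomplete.
    + by have := complete_adj_not_tip anti_s2 not_tip_s2 cmp_v; rewrite (negbTE vs2).
    + apply: nonadj_anchor_tip_mixed mixed_s2; rewrite /nonadj_anchor_tip anti_a /=.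
      by apply/existsP; exists v; rewrite cmp_v.
  have not_anti_s2 : ~~ anticomplete s2.
    by apply: contraNN vs2 => anti_s2; apply: complete_adj_not_tip.
  have := complete_pair_common_nbr cmp_c anti_a ca cmp_v not_anti_s2
    (adj_anchor_center_complete admS center_c s2S) s2a vc va.
  by rewrite (negbTE vs2).
- exact: complete_adj_not_tip anti_v not_tip_v cmp_c.
- exact: adj_anchor_center_mixed center_c mixed_v.
Qed.

Lemma splitter_keeps_mixed_nonnbr : (exists2 x, x \in v |: S & complete x) ->
  exists x w, [/\ x \in v |: S, w \in v |: S, complete x, mixed w & ~~ e x w].
Proof.
move=> [x xvS cmp_x].
case: (boolP [exists x in S, complete x]) => [/exists_inP[y yS cmp_y] | noS].
  have [x' [w [x'S wS]]] := complete_has_mixed_nonnbr admS (ex_intro2 _ _ y yS cmp_y).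
  by exists x', w; rewrite !setU1r.
have cmp_v : complete v.
  case/setU1P: xvS cmp_x => [-> // | xS cmp_x].
  by case/negP: noS; apply/exists_inP; exists x.
have [_ not_tip_s2 _] := not_excludedP (admissible_not_excluded admS s2S).
exists v, s2; split; rewrite ?setU11 ?setU1r // /mixed; apply/andP; split.
  by apply: contraNN noS => cmp_s2; apply/exists_inP; exists s2.
by apply: contraNN vs2 => anti_s2; apply: complete_adj_not_tip.
Qed.

Lemma admissible_add_splitter : admissible (v |: S).
Proof.
have [p1S p2S notexS centerS _] := admS.
split; rewrite ?setU1r //.
- by move=> u /setU1P[-> | /notexS]; first exact: splitter_not_excluded.
- move=> c center_c u /setU1P[-> | /(centerS c center_c)] //.
  exact: adj_anchor_center_adj_splitter.
- exact: splitter_keeps_mixed_nonnbr.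
Qed.

End AddSplitter.

Lemma admissible_edge : admissible [set p1; p2].
Proof.
have on_edge (p : T) : p \in [set p1; p2] ->
    [/\ ~~ complete p, ~~ anticomplete p & forall a, anticomplete a -> ~~ e p a].
  rewrite !inE /complete /anticomplete => /orP[] /eqP->.
    by rewrite irr e12; split=> // a /and4P[a1 _ _ _]; rewrite sym.
  by rewrite irr (sym p2 p1) e12 andbF; split=> // a /and4P[_ a2 _ _]; rewrite sym.
split; rewrite ?inE ?eqxx ?orbT //.
- move=> p /on_edge[not_cmp_p not_anti_p p_nonadj].
  rewrite /excluded /adj_anchor_center /nonadj_anchor_tip.
  rewrite (negbTE not_cmp_p) (negbTE not_anti_p) /=.
  by apply/existsPn => a; apply/negP => /andP[/andP[/p_nonadj/negP]].
- by move=> c /andP[/and4P[c1 c2 _ _] _] p; rewrite !inE => /orP[] /eqP->.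
- by case=> x /on_edge[/negP].
Qed.

Lemma maximal_admissible S : admissible S ->
  exists2 S', admissible S' & forall v, v \notin S' -> ~~ splits e S' v.
Proof.
have [n] := ubnP #|~: S|; elim: n S => // n IH S lt_Sn admS.
case: (pickP [pred v | (v \notin S) && splits e S v]) => [v /= /andP[vS] | unsplit].
  case/andP=> /exists_inP[s1 s1S vs1] /exists_inP[s2 s2S vs2].
  have shrinks : #|~: (v |: S)| < #|~: S|.
    by apply: proper_card; rewrite properC properUr // sub1set.
  exact: IH (leq_trans shrinks lt_Sn) (admissible_add_splitter admS s1S vs1 s2S vs2).
by exists S => // v vS; move: (unsplit v); rewrite /= vS /= => ->.
Qed.

Lemma exists_homogeneous b : excluded b -> exists X, homogeneous e X.
Proof.
move=> excl_b; have [S admS unsplit] := maximal_admissible admissible_edge.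
exists S; apply: homogeneous_of_unsplit unsplit; apply/andP; split.
  apply/card_gt1P; exists p1, p2; split; [exact: p1_in | exact: p2_in |].
  by apply: contraTneq e12 => ->; rewrite irr.
rewrite -cardsT; apply: proper_card; rewrite properT.
by apply: contraTneq excl_b => S_T; apply: (admissible_not_excluded admS); rewrite S_T inE.
Qed.

End AlongAnInducedPath.
End BullC5Free.

Lemma anchor_path_excluded (T : finType) (e : rel T) : contains_anchor e ->
  exists p1 p2 p3 p4 b : T, [/\ e p1 p2, e p2 p3 & e p3 p4] /\
    [/\ ~~ e p1 p3, ~~ e p1 p4, ~~ e p2 p4 & excluded e p1 p2 p3 p4 b].
Proof.
pose o i (lt_i6 : i < 6) := Ordinal lt_i6.
case=> -[f [_ f_rel]]; exists (f (o 0 isT)), (f (o 1 isT)), (f (o 2 isT)), (f (o 3 isT)).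
- exists (f (o 5 isT)); do !split; rewrite -?f_rel //.
  apply/orP; right; apply/orP; left; rewrite /nonadj_anchor_tip /anticomplete -!f_rel.
  by apply/existsP; exists (f (o 4 isT)); rewrite /complete -!f_rel.
- exists (f (o 4 isT)); do !split; rewrite -?f_rel //.
  apply/orP; left; rewrite /adj_anchor_center /complete -!f_rel.
  by apply/existsP; exists (f (o 5 isT)); rewrite /anticomplete -!f_rel.
Qed.

Theorem theorem1p4 (T : finType) (e : rel T) :
  simple_graph e ->
  ~ has_induced e C5 ->
  ~ has_induced e bull ->
  contains_anchor e ->
  exists X : {set T}, homogeneous e X.
Proof.
move=> [irr sym] noC5 nobull /anchor_path_excluded
  [p1 [p2 [p3 [p4 [b [[e12 e23 e34] [n13 n14 n24 excl_b]]]]]]].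
exact: (exists_homogeneous irr sym noC5 nobull e12 e23 e34 n13 n14 n24 excl_b).
Qed.
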